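(* Fix $p,t,n$ and a dropout distribution $\vec a$, and let $\Phi$ be any criterion satisfying (C.1)--(C.3). Then for every crossover design $d$ we have $\phi_0(d)\le\phi_1(d)$. Moreover, $e_0(d)\ge e_1(d)\,g(d)$ for every design $d$; in particular, if $d$ is $\phi_1$-optimal then $e_0(d)\ge g(d)$.
   Context: A crossover design $d$ with $p$ periods, $t$ treatments and $n$ subjects assigns treatment $d(k,u)\in\{1,\dots,t\}$ to subject $u$ in period $k$. Responses follow $Y_{dku}=\mu+\pi_k+\varsigma_u+\tau_{d(k,u)}+\gamma_{d(k-1,u)}+\varepsilon_{ku}$ (with $\gamma_{d(0,u)}=0$), errors independent with mean $0$, variance $1$. In vector form, with responses ordered subject by subject and within subject by period, $Y_d=1_{np}\mu+Z\pi+U\varsigma+T_d\tau+F_d\gamma+\varepsilon$, where $Z=1_n\otimes I_p$, $U=I_n\otimes 1_p$, $T_d$ is the $np\times t$ treatment incidence matrix (row $(u,k)$ is the indicator of $d(k,u)$) and $F_d$ the carryover incidence matrix (row $(u,1)$ zero, row $(u,k)$ the indicator of $d(k-1,u)$ for $k\ge2$). Subject dropout: $l_u\in\{1,\dots,p\}$ is the number of periods subject $u$ stays (no re-entry); $l_1,\dots,l_n$ are i.i.d., independent of the design and outcomes, with $P(l_u=k)=a_k$, $\vec a=(a_1,\dots,a_p)$. For integers $k\le i$, $I^k_{ij}$ is the $i\times j$ matrix whose upper-left $k\times k$ block is $I_k$ and other entries $0$. Let $M=\mathrm{diag}(I^{l_1}_{l_1p},\dots,I^{l_n}_{l_np})$,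 $\mathrm{pr}^\perp(G)=I-G(G'G)^-G'$ ($^-$ a generalized inverse, $[G_1|G_2]$ column concatenation), $O=M'\,\mathrm{pr}^\perp([MZ|MU])\,M$, $C_{d11}(l)=T_d'OT_d$, $C_{d12}(l)=T_d'OF_d=C_{d21}(l)'$, $C_{d22}(l)=F_d'OF_d$, and $C_d(\tau,l)=C_{d11}(l)-C_{d12}(l)C_{d22}(l)^-C_{d21}(l)$ (the information matrix for $\tau$ given dropout realization $l$). Let $C_{dij}=\mathbb E\,C_{dij}(l)$ (expectation over $l$) and $C_d=C_{d11}-C_{d12}C_{d22}^-C_{d21}$. A criterion $\Phi$ is a real function on $t\times t$ nonnegative definite matrices with (C.1) $\Phi$ concave; (C.2) $\Phi(S'CS)=\Phi(C)$ for every permutation matrix $S$; (C.3) $b\mapsto\Phi(bC)$ nondecreasing for $b>0$. Define $\phi_0(d)=\mathbb E\,\Phi(C_d(\tau,l))$ and $\phi_1(d)=\Phi(C_d)$. For $i=0,1$ let $d_i^*$ be a design maximizing $\phi_i$ over all designs with the given $p,t,n$, and $e_i(d)=\phi_i(d)/\phi_i(d_i^* )$; let $g(d)=\phi_0(d)/\phi_1(d)$. A design is $\phi_1$-optimal if it maximizes $\phi_1$. *)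

From HB Require Import structures.
From mathcomp Require Import all_boot all_order all_algebra all_fingroup.
Set Implicit Arguments. Unset Strict Implicit. Unset Printing Implicit Defensive.
Import Order.TTheory GRing.Theory Num.Theory.
Local Open Scope ring_scope.

Section Crossover.
Variables (R : realFieldType) (p t n : nat).

(* A crossover design: d u k = treatment (0-based, in 'I_t) given to subject u
   in period k (both 0-based). *)
Definition design := 'I_n -> 'I_p -> 'I_t.

(* A dropout realization: l u : 'I_p encodes l_u = (l u) + 1, the number of
   periods subject u stays. *)
Definition dropout := {ffun 'I_n -> 'I_p}.

(* Row index r of an np-vector, ordered subject by subject and within subject
   by period, decoded as (subject, period). *)
Definition idx (r : 'I_(n * p)) : 'I_n * 'I_p :=
  enum_val (cast_ord (esym (@mxvec_cast n p)) r).

(* Z = 1_n (x) I_p ,  U = I_n (x) 1_p *)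
Definition Zmx : 'M[R]_(n * p, p) := \matrix_(r, k) ((idx r).2 == k)%:R.
Definition Umx : 'M[R]_(n * p, n) := \matrix_(r, u) ((idx r).1 == u)%:R.

Definition Tmx (d : design) : 'M[R]_(n * p, t) :=
  \matrix_(r, i) (d (idx r).1 (idx r).2 == i)%:R.
Definition Fmx (d : design) : 'M[R]_(n * p, t) :=
  \matrix_(r, i)
    [exists k : 'I_p, (k.+1 == (idx r).2 :> nat) && (d (idx r).1 k == i)]%:R.

Definition obs (l : dropout) : seq 'I_(n * p) :=
  [seq c <- enum 'I_(n * p) | (((idx c).2 : nat) < (l (idx c).1).+1)%N].

(* M = diag(I^{l_1}_{l_1 p}, ..., I^{l_n}_{l_n p}) *)
Definition Mmx (l : dropout) : 'M[R]_(size (obs l), n * p) :=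
  \matrix_(r, c) (nth c (obs l) r == c)%:R.

(* generalized inverses are taken to be MathComp's pinvmx, which satisfies
   A *m pinvmx A *m A = A *)
Definition prperp m q (G : 'M[R]_(m, q)) : 'M[R]_m :=
  1%:M - G *m pinvmx (G^T *m G) *m G^T.

Definition Omx (l : dropout) : 'M[R]_(n * p) :=
  (Mmx l)^T *m prperp (row_mx (Mmx l *m Zmx) (Mmx l *m Umx)) *m Mmx l.

Definition C11 (d : design) l : 'M[R]_t := (Tmx d)^T *m Omx l *m Tmx d.
Definition C12 (d : design) l : 'M[R]_t := (Tmx d)^T *m Omx l *m Fmx d.
Definition C21 (d : design) l : 'M[R]_t := (C12 d l)^T.
Definition C22 (d : design) l : 'M[R]_t := (Fmx d)^T *m Omx l *m Fmx d.

Definition Cinfo (d : design) l : 'M[R]_t :=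
  C11 d l - C12 d l *m pinvmx (C22 d l) *m C21 d l.

(* probability of the realization l under the dropout distribution a,
   a k = P(l_u = k + 1) *)
Definition prob (a : 'I_p -> R) (l : dropout) : R := \prod_(u < n) a (l u).

Definition dropout_dist (a : 'I_p -> R) : Prop :=
  (forall k, 0 <= a k) /\ \sum_(k < p) a k = 1.

Definition ECij (Cij : design -> dropout -> 'M[R]_t) a d : 'M[R]_t :=
  \sum_(l : dropout) prob a l *: Cij d l.

Definition Cbar a (d : design) : 'M[R]_t :=
  ECij C11 a d - ECij C12 a d *m pinvmx (ECij C22 a d) *m ECij C21 a d.

Definition phi0 (Phi : 'M[R]_t -> R) a (d : design) : R :=
  \sum_(l : dropout) prob a l * Phi (Cinfo d l).
Definition phi1 (Phi : 'M[R]_t -> R) a (d : design) : R := Phi (Cbar a d).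

Definition nnd (C : 'M[R]_t) : Prop :=
  C^T = C /\ forall x : 'rV[R]_t, 0 <= (x *m C *m x^T) 0 0.

(* (C.1)-(C.3), required on nonnegative definite arguments *)
Definition criterion (Phi : 'M[R]_t -> R) : Prop :=
  (forall A B : 'M[R]_t, nnd A -> nnd B -> forall lam : R, 0 <= lam <= 1 ->
      lam * Phi A + (1 - lam) * Phi B <= Phi (lam *: A + (1 - lam) *: B))
  /\ (forall (s : 'S_t) (C : 'M[R]_t), nnd C ->
      Phi ((perm_mx s)^T *m C *m perm_mx s) = Phi C)
  /\ (forall (C : 'M[R]_t) (b1 b2 : R), nnd C -> 0 < b1 -> b1 <= b2 ->
      Phi (b1 *: C) <= Phi (b2 *: C)).

End Crossover.

(* Since O is an orthogonal projection sandwiched between M^T and M, it factors as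
   O = W^T W, so C_d(tau, l) is the Schur complement
   X^T X - X^T Y (Y^T Y)^- Y^T X of the Gram matrix of [X | Y], X = W T_d, Y = W F_d.
   Schur complements are partial minima of quadratic forms,
   x S x^T = min_y [x y] G [x y]^T, so the Schur complement of an average of Gram
   matrices dominates the average of their Schur complements: C_d >= E C_d(tau, l) in
   the Loewner order.  Concavity gives Jensen's inequality E Phi(C) <= Phi(E C), and
   concavity together with (C.3) makes Phi monotone in the Loewner order; hence
   phi0 <= phi1.  The efficiency bounds are then elementary inequalities between the
   nonnegative numbers phi0 d, phi1 d, phi0 d0*, phi1 d1*. *)

From HB Require Import structures.
From mathcomp Require Import all_boot all_order all_algebra all_fingroup.
From mathcomp Require Import ring lra.
Import Order.TTheory GRing.Theory Num.Theory.
Set Implicit Arguments. Unset Strict Implicit. Unset Printing Implicit Defensive.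
Local Open Scope ring_scope.

Section GramMatrix.
Variable R : realFieldType.

Lemma gram_diagE m q (Z : 'M[R]_(m, q)) j : (Z^T *m Z) j j = \sum_i Z i j ^+ 2.
Proof. by rewrite !mxE; apply: eq_bigr => i _; rewrite mxE expr2. Qed.

Lemma gram_diag_ge0 m q (Z : 'M[R]_(m, q)) j : 0 <= (Z^T *m Z) j j.
Proof. by rewrite gram_diagE; apply: sumr_ge0 => i _; apply: sqr_ge0. Qed.

Lemma gram_diag_eq0 m q (Z : 'M[R]_(m, q)) :
  (forall j, (Z^T *m Z) j j = 0) -> Z = 0.
Proof.
move=> Z0; apply/matrixP => i j; rewrite mxE.
have /psumr_eq0P Zj0 : \sum_i Z i j ^+ 2 = 0 by rewrite -gram_diagE.
by apply/eqP; rewrite -sqrf_eq0; apply/eqP; apply: Zj0 => // k _; apply: sqr_ge0.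
Qed.

Lemma gram_sym m q (Z : 'M[R]_(m, q)) : (Z^T *m Z)^T = Z^T *m Z.
Proof. by rewrite trmx_mul trmxK. Qed.

Lemma mulmx_trmx_ge0 m (u : 'rV[R]_m) : 0 <= (u *m u^T) 0 0.
Proof. by have := gram_diag_ge0 u^T 0; rewrite trmxK. Qed.

End GramMatrix.

Section OrthogonalProjection.
Variables (R : realFieldType) (m q : nat) (G : 'M[R]_(m, q)).
Local Notation H := (pinvmx (G^T *m G)).

Lemma mulmx_pinv_gram : G *m H *m (G^T *m G) = G.
Proof.
have := mulmxKpV (submx_refl (G^T *m G)); move: H => K GKG.
set E := G *m K *m (G^T *m G) - G.
have GtE : G^T *m E = 0 by rewrite /E mulmxBr !mulmxA -(mulmxA (G^T *m G *m K)) GKG subrr.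
have EtE : E^T *m E = 0.
  have -> : E^T = G^T *m G *m K^T *m G^T - G^T.
    by rewrite linearB /= !trmx_mul trmxK !mulmxA.
  by rewrite mulmxBl -!mulmxA GtE !mulmx0 subrr.
suff /eqP : E = 0 by rewrite subr_eq0 => /eqP.
by apply: gram_diag_eq0 => j; rewrite EtE mxE.
Qed.

Lemma mulmx_proj_gram : G *m H *m G^T *m G = G.
Proof. by rewrite -mulmxA mulmx_pinv_gram. Qed.

Lemma proj_gram_sym : (G *m H *m G^T)^T = G *m H *m G^T.
Proof.
have := mulmx_pinv_gram; have := mulmx_proj_gram; move: H => K GKGG GKGtG.
have GtE : G^T = G^T *m G *m K^T *m G^T.
  by rewrite -{1}GKGtG !trmx_mul trmxK !mulmxA.
by rewrite !trmx_mul trmxK mulmxA {2}GtE !mulmxA GKGG.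
Qed.

Lemma proj_gram_idem : G *m H *m G^T *m (G *m H *m G^T) = G *m H *m G^T.
Proof.
by have := mulmx_proj_gram; move: H => K GKGG; rewrite !mulmxA GKGG.
Qed.

Lemma prperp_sym : (prperp G)^T = prperp G.
Proof. by rewrite linearB /= trmx1 proj_gram_sym. Qed.

Lemma prperp_idem : prperp G *m prperp G = prperp G.
Proof.
by rewrite mulmxBl !mulmxBr !mul1mx mulmx1 proj_gram_idem subrr subr0.
Qed.

Lemma prperp_gram k (M : 'M[R]_(m, k)) :
  M^T *m prperp G *m M = (prperp G *m M)^T *m (prperp G *m M).
Proof.
have := prperp_idem; have := prperp_sym; move: (prperp G) => P Psym Pidem.
by rewrite trmx_mul Psym !mulmxA -(mulmxA M^T P P) Pidem.
Qed.

End OrthogonalProjection.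

Section NonnegativeDefinite.
Variables (R : realFieldType) (t : nat).
Implicit Types (A B M : 'M[R]_t) (x y : 'rV[R]_t).

Definition qf M x : R := (x *m M *m x^T) 0 0.

Lemma qfD A B x : qf (A + B) x = qf A x + qf B x.
Proof.
rewrite /qf mulmxDr mulmxDl.
by move: (x *m A *m x^T) (x *m B *m x^T) => P Q; rewrite !mxE.
Qed.

Lemma qfB A B x : qf (A - B) x = qf A x - qf B x.
Proof.
rewrite /qf mulmxBr mulmxBl.
by move: (x *m A *m x^T) (x *m B *m x^T) => P Q; rewrite !mxE.
Qed.

Lemma qfZ a A x : qf (a *: A) x = a * qf A x.
Proof. by rewrite /qf -scalemxAr -scalemxAl; move: (x *m A *m x^T) => P; rewrite mxE. Qed.

Lemma qf_sum (I : Type) (r : seq I) (w : I -> R) (M : I -> 'M[R]_t) x :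
  qf (\sum_(i <- r) w i *: M i) x = \sum_(i <- r) w i * qf (M i) x.
Proof.
by rewrite /qf mulmx_sumr mulmx_suml summxE; apply: eq_bigr => i _; rewrite -qfZ.
Qed.

Lemma qf_gram_ge0 m (Y : 'M[R]_(m, t)) x : 0 <= qf (Y^T *m Y) x.
Proof.
rewrite /qf mulmxA.
by have := mulmx_trmx_ge0 (x *m Y^T); rewrite trmx_mul trmxK !mulmxA.
Qed.

Lemma nnd0 : nnd (0 : 'M[R]_t).
Proof. by split=> [|x]; rewrite ?trmx0 // mulmx0 mul0mx mxE. Qed.

Lemma nnd_add A B : nnd A -> nnd B -> nnd (A + B).
Proof.
move=> [A_sym A_ge0] [B_sym B_ge0]; split; first by rewrite linearD /= A_sym B_sym.
by move=> x; change (0 <= qf (A + B) x); rewrite qfD addr_ge0 ?A_ge0 ?B_ge0.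
Qed.

Lemma nnd_scale A a : nnd A -> 0 <= a -> nnd (a *: A).
Proof.
move=> [A_sym A_ge0] a_ge0; split; first by rewrite linearZ /= A_sym.
by move=> x; change (0 <= qf (a *: A) x); rewrite qfZ mulr_ge0 ?A_ge0.
Qed.

Lemma nnd_sum (I : Type) (r : seq I) (w : I -> R) (M : I -> 'M[R]_t) :
  (forall i, 0 <= w i) -> (forall i, nnd (M i)) -> nnd (\sum_(i <- r) w i *: M i).
Proof.
move=> w_ge0 nM; apply: big_ind => [|A B|i _].
- exact: nnd0.
- exact: nnd_add.
- exact: nnd_scale.
Qed.

End NonnegativeDefinite.

Section SchurComplement.
Variables (R : realFieldType) (t : nat).
Implicit Types (A B C : 'M[R]_t) (x y : 'rV[R]_t).

Definition schur A B C := A - B *m pinvmx C *m B^T.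

Definition block_qf A B C x y : R :=
  (x *m A *m x^T + x *m B *m y^T + y *m B^T *m x^T + y *m C *m y^T) 0 0.

Lemma block_qf_sum (I : finType) (w : I -> R) (A B C : I -> 'M[R]_t) x y :
  block_qf (\sum_i w i *: A i) (\sum_i w i *: B i) (\sum_i w i *: C i) x y =
  \sum_i w i * block_qf (A i) (B i) (C i) x y.
Proof.
have sumBt : (\sum_i w i *: B i)^T = \sum_i w i *: (B i)^T.
  by rewrite linear_sum; apply: eq_bigr => i _; rewrite linearZ.
rewrite /block_qf sumBt !mulmx_sumr !mulmx_suml -!big_split summxE /=.
apply: eq_bigr => i _; rewrite -!scalemxAr -!scalemxAl -!scalerDr.
by move: (_ + _ + _ + _) => P; rewrite mxE.
Qed.

Section KernelInclusion.
Variables B C : 'M[R]_t.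
Hypothesis C_sym : C^T = C.
Hypothesis kerCB : forall V : 'M[R]_t, C *m V = 0 -> B *m V = 0.

Lemma mulmx_pinv_ker : B *m pinvmx C *m C = B.
Proof.
have := mulmxKpV (submx_refl C); move: (pinvmx C) => K CKC.
apply/eqP; rewrite -subr_eq0 -[X in _ - X]mulmx1 -mulmxA -mulmxBr.
by apply/eqP/kerCB; rewrite mulmxBr mulmx1 mulmxA CKC subrr.
Qed.

Lemma schur_sym A : A^T = A -> (schur A B C)^T = schur A B C.
Proof.
move=> A_sym; have := mulmx_pinv_ker; rewrite /schur.
move: (B *m pinvmx C) => L <-.
by rewrite linearB /= A_sym !trmx_mul !trmxK C_sym !mulmxA.
Qed.

(* Completing the square: the Schur form is the partial minimum of the block form. *)
Lemma block_qf_schur A x y :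
  block_qf A B C x y = qf (schur A B C) x + qf C (x *m (B *m pinvmx C) + y).
Proof.
have := mulmx_pinv_ker; rewrite /block_qf /qf /schur.
move: (B *m pinvmx C) => K <-.
set Q := (x *m K + y) *m C *m (x *m K + y)^T.
have -> : x *m A *m x^T + x *m (K *m C) *m y^T + y *m (K *m C)^T *m x^T +
    y *m C *m y^T = x *m (A - K *m (K *m C)^T) *m x^T + Q.
  rewrite /Q !trmx_mul C_sym [(x *m K + y)^T]linearD /= trmx_mul.
  rewrite !mulmxDl !mulmxDr !mulmxA.
  by rewrite mulmxN mulmxDl mulNmx !mulmxA !addrA subrK.
by move: (x *m _ *m x^T) Q => P Q; rewrite mxE.
Qed.

Lemma qf_schur_le A x y :
  (forall z, 0 <= qf C z) -> qf (schur A B C) x <= block_qf A B C x y.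
Proof. by move=> C_ge0; rewrite block_qf_schur lerDl. Qed.

Lemma qf_schurE A x :
  qf (schur A B C) x = block_qf A B C x (- (x *m (B *m pinvmx C))).
Proof. by rewrite block_qf_schur subrr /qf !mul0mx [X in _ + X]mxE addr0. Qed.

End KernelInclusion.
End SchurComplement.

Section GramSchur.
Variables (R : realFieldType) (m t : nat) (X Y : 'M[R]_(m, t)).

Definition gram_schur := schur (X^T *m X) (X^T *m Y) (Y^T *m Y).

Lemma gram_ker (V : 'M[R]_t) : Y^T *m Y *m V = 0 -> X^T *m Y *m V = 0.
Proof.
move=> YtYV0; suff YV0 : Y *m V = 0 by rewrite -mulmxA YV0 mulmx0.
apply: gram_diag_eq0 => j.
by rewrite trmx_mul -mulmxA (mulmxA Y^T) YtYV0 mulmx0 mxE.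
Qed.

Lemma gram_block_qf_ge0 x y : 0 <= block_qf (X^T *m X) (X^T *m Y) (Y^T *m Y) x y.
Proof.
have := mulmx_trmx_ge0 (x *m X^T + y *m Y^T).
rewrite /block_qf [(_ + _)^T]linearD /= !trmx_mul !trmxK.
by rewrite !mulmxDl !mulmxDr !mulmxA !addrA.
Qed.

Lemma gram_schur_nnd : nnd gram_schur.
Proof.
split; first by apply: schur_sym; rewrite ?gram_sym // => V; apply: gram_ker.
move=> x; rewrite -/(qf _ x) qf_schurE ?gram_sym //; last exact: gram_ker.
exact: gram_block_qf_ge0.
Qed.

End GramSchur.

Section WeightedGramSchur.
Variables (R : realFieldType) (t : nat) (I : finType) (m : I -> nat).
Variables (X Y : forall i, 'M[R]_(m i, t)) (w : I -> R).
Hypothesis w_ge0 : forall i, 0 <= w i.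

Local Notation wsum F := (\sum_i w i *: F i).
Local Notation XtX := (fun i => (X i)^T *m X i).
Local Notation XtY := (fun i => (X i)^T *m Y i).
Local Notation YtY := (fun i => (Y i)^T *m Y i).

Lemma wsum_sym (F : I -> 'M[R]_t) : (forall i, (F i)^T = F i) -> (wsum F)^T = wsum F.
Proof.
by move=> F_sym; rewrite linear_sum; apply: eq_bigr => i _; rewrite linearZ /= F_sym.
Qed.

Lemma wgram_ker (V : 'M[R]_t) : wsum YtY *m V = 0 -> wsum XtY *m V = 0.
Proof.
move=> CV0; rewrite mulmx_suml; apply: big1 => i _.
have [->|wi_neq0] := eqVneq (w i) 0; first by rewrite scale0r mul0mx.
suff YV0 : Y i *m V = 0 by rewrite -scalemxAl -mulmxA YV0 mulmx0 scaler0.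
apply: gram_diag_eq0 => j.
have termE k : (V^T *m (w k *: ((Y k)^T *m Y k)) *m V) j j =
    w k * ((Y k *m V)^T *m (Y k *m V)) j j.
  rewrite -scalemxAr -scalemxAl trmx_mul !mulmxA.
  by move: (V^T *m _ *m _ *m V) => P; rewrite mxE.
have : \sum_k w k * ((Y k *m V)^T *m (Y k *m V)) j j = 0.
  under eq_bigr do rewrite -termE.
  by rewrite -summxE -mulmx_suml -mulmx_sumr -mulmxA CV0 mulmx0 mxE.
move=> /psumr_eq0P sum0.
have /eqP := sum0 (fun k _ => mulr_ge0 (w_ge0 k) (gram_diag_ge0 _ j)) i isT.
by rewrite mulf_eq0 (negbTE wi_neq0) => /eqP.
Qed.

Lemma wgram_sym (Z : forall i, 'M[R]_(m i, t)) :
  (wsum (fun i => (Z i)^T *m Z i))^T = wsum (fun i => (Z i)^T *m Z i).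
Proof. by apply: wsum_sym => i; apply: gram_sym. Qed.

(* Evaluate the averaged block form at its minimizer in y: each summand there is at
   least the corresponding Schur form. *)
Lemma wgram_schur_ge : nnd (schur (wsum XtX) (wsum XtY) (wsum YtY) -
                             \sum_i w i *: gram_schur (X i) (Y i)).
Proof.
split.
  rewrite linearB /= schur_sym ?wgram_sym //; last exact: wgram_ker.
  by rewrite wsum_sym // => i; case: (gram_schur_nnd (X i) (Y i)).
move=> x; rewrite -/(qf _ x) qfB qf_sum subr_ge0.
rewrite qf_schurE ?wgram_sym //; last exact: wgram_ker.
rewrite block_qf_sum; apply: ler_sum => i _; apply: ler_wpM2l => //.
apply: qf_schur_le => [||z]; [exact: gram_sym|exact: gram_ker|exact: qf_gram_ge0].
Qed.

End WeightedGramSchur.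

Section Criterion.
Variables (R : realFieldType) (t : nat) (Phi : 'M[R]_t -> R).
Hypothesis Phi_crit : criterion Phi.
Implicit Types (X D : 'M[R]_t).

Lemma criterion_concave X Y lam : nnd X -> nnd Y -> 0 <= lam <= 1 ->
  lam * Phi X + (1 - lam) * Phi Y <= Phi (lam *: X + (1 - lam) *: Y).
Proof. by move=> nX nY lam01; case: Phi_crit => concave _; exact: concave. Qed.

Lemma criterion_line_le X D s : nnd X -> nnd D -> 1 <= s ->
  Phi (X + s *: D) <= Phi X - s * (Phi X - Phi (X + D)).
Proof.
move=> nX nD s_ge1; have s_gt0 : 0 < s by apply: lt_le_trans s_ge1.
have nXsD : nnd (X + s *: D) by apply/nnd_add/nnd_scale; rewrite ?ltW.
have sinv_gt0 : 0 < s^-1 by rewrite invr_gt0.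
have sinv_le1 : s^-1 <= 1 by rewrite invf_le1.
have lam01 : 0 <= 1 - s^-1 <= 1 by apply/andP; split; lra.
have := criterion_concave nX nXsD lam01.
have -> : (1 - s^-1) *: X + (1 - (1 - s^-1)) *: (X + s *: D) = X + D.
  by apply/matrixP => i j; rewrite !mxE; field; rewrite gt_eqF.
have -> : 1 - (1 - s^-1) = s^-1 by rewrite opprB addrC subrK.
move=> /(ler_wpM2l (ltW s_gt0)); rewrite mulrDr mulrA mulrA mulfV ?gt_eqF // mul1r.
rewrite mulrBr mulr1 mulrBl ?mulfV ?gt_eqF // mul1r; lra.
Qed.

(* Concavity at the midpoint and (C.3) bound [Phi] from below along the ray [X + s D]. *)
Lemma criterion_line_ge X D s : nnd X -> nnd D -> 1 <= s ->
  (Phi (2%:R *: X) + Phi (2%:R *: D)) / 2%:R <= Phi (X + s *: D).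
Proof.
move=> nX nD s_ge1; have s_ge0 : 0 <= s by apply: le_trans s_ge1.
have two_ge0 : 0 <= (2%:R : R) by [].
have half01 : 0 <= (2%:R : R)^-1 <= 1 by apply/andP; split; lra.
have := criterion_concave (nnd_scale nX two_ge0)
  (nnd_scale (nnd_scale nD s_ge0) two_ge0) half01.
have -> : 2%:R^-1 *: (2%:R *: X) + (1 - 2%:R^-1) *: (2%:R *: (s *: D)) = X + s *: D.
  by apply/matrixP => i j; rewrite !mxE; field.
have : Phi (2%:R *: D) <= Phi ((2%:R * s) *: D).
  by case: Phi_crit => _ [_ scale_mono]; apply: scale_mono => //; lra.
rewrite scalerA mulrC; lra.
Qed.

(* A concave function on a ray that is bounded below cannot decrease. *)
Lemma criterion_mono X D : nnd X -> nnd D -> Phi X <= Phi (X + D).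
Proof.
move=> nX nD; rewrite leNgt; apply/negP => lt_XD_X.
set L := (Phi (2%:R *: X) + Phi (2%:R *: D)) / 2%:R.
set d := Phi X - Phi (X + D).
have d_gt0 : 0 < d by rewrite subr_gt0.
set s := 1 + `|Phi X - L| / d.
have s_ge1 : 1 <= s by rewrite lerDl divr_ge0 // ltW.
have sdE : s * d = d + `|Phi X - L| by rewrite mulrDl mul1r divfK ?gt_eqF.
have := criterion_line_le nX nD s_ge1; rewrite -/d sdE.
have := criterion_line_ge nX nD s_ge1; rewrite -/L.
have := ler_norm (Phi X - L); lra.
Qed.

Lemma criterion_jensen (I : eqType) (r : seq I) (w : I -> R) (C : I -> 'M[R]_t) :
  (forall i, 0 <= w i) -> (forall i, nnd (C i)) -> \sum_(i <- r) w i = 1 ->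
  \sum_(i <- r) w i * Phi (C i) <= Phi (\sum_(i <- r) w i *: C i).
Proof.
move=> + nC; elim: r w => [|h r IH] w w_ge0.
  by rewrite big_nil => /eqP; rewrite eq_sym oner_eq0.
rewrite !big_cons => sum1.
have S_ge0 : 0 <= \sum_(i <- r) w i by apply: sumr_ge0.
have [S0|S_neq0] := eqVneq (\sum_(i <- r) w i) 0.
  have w0 i : i \in r -> w i = 0.
    by move: S0 => /eqP; rewrite psumr_eq0 // => /allP r0 /r0 /eqP.
  rewrite big1_seq => [|i /andP [_ /w0 ->]]; last by rewrite mul0r.
  rewrite big1_seq => [|i /andP [_ /w0 ->]]; last by rewrite scale0r.
  by move: sum1; rewrite S0 addr0 => ->; rewrite mul1r scale1r !addr0.
set S := \sum_(i <- r) w i in sum1 S_ge0 S_neq0.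
have S_gt0 : 0 < S by rewrite lt_def S_neq0.
have := IH (fun i => w i / S) (fun i => divr_ge0 (w_ge0 i) S_ge0).
rewrite -mulr_suml divff // => /(_ erefl).
set E := \sum_(i <- r) (w i / S) *: C i => IH_E.
have -> : \sum_(i <- r) w i *: C i = S *: E.
  rewrite scaler_sumr; apply: eq_bigr => i _; rewrite scalerA.
  by rewrite mulrC divfK ?gt_eqF.
have -> : \sum_(i <- r) w i * Phi (C i) = S * \sum_(i <- r) w i / S * Phi (C i).
  by rewrite mulr_sumr; apply: eq_bigr => i _; rewrite mulrA [S * _]mulrC divfK ?gt_eqF.
have wh01 : 0 <= w h <= 1 by apply/andP; split => //; lra.
have nE : nnd E by apply: nnd_sum => // i; exact: divr_ge0.
have := criterion_concave (nC h) nE wh01.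
have -> : 1 - w h = S by lra.
have := ler_wpM2l S_ge0 IH_E; lra.
Qed.

End Criterion.

Section Crossover.
Variables (R : realFieldType) (p t n : nat).
Implicit Types l : dropout p n.

Definition Wmx (l : dropout p n) : 'M[R]_(size (obs l), n * p) :=
  prperp (row_mx (Mmx R l *m Zmx R p n) (Mmx R l *m Umx R p n)) *m Mmx R l.

Lemma Omx_gram l : Omx R l = (Wmx l)^T *m Wmx l.
Proof. exact: prperp_gram. Qed.

Variable d : design p t n.
Local Notation XT l := (Wmx l *m Tmx R d).
Local Notation XF l := (Wmx l *m Fmx R d).

Lemma C11_gram l : C11 R d l = (XT l)^T *m XT l.
Proof. by rewrite /C11 Omx_gram !trmx_mul !mulmxA. Qed.

Lemma C12_gram l : C12 R d l = (XT l)^T *m XF l.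
Proof. by rewrite /C12 Omx_gram !trmx_mul !mulmxA. Qed.

Lemma C22_gram l : C22 R d l = (XF l)^T *m XF l.
Proof. by rewrite /C22 Omx_gram !trmx_mul !mulmxA. Qed.

Lemma Cinfo_gram_schur l : Cinfo R d l = gram_schur (XT l) (XF l).
Proof. by rewrite /Cinfo /C21 C11_gram C12_gram C22_gram. Qed.

Lemma nnd_Cinfo l : nnd (Cinfo R d l).
Proof. by rewrite Cinfo_gram_schur; apply: gram_schur_nnd. Qed.

Variable a : 'I_p -> R.
Hypothesis a_dist : dropout_dist a.

Lemma prob_ge0 l : 0 <= prob a l.
Proof. by case: a_dist => a_ge0 _; apply: prodr_ge0. Qed.

Lemma sum_prob : \sum_(l : dropout p n) prob a l = 1.
Proof.
case: a_dist => _ sum_a.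
by rewrite /prob -(bigA_distr_bigA (fun _ k => a k)) /= sum_a big1.
Qed.

Lemma Cbar_wgram_schur :
  Cbar a d = schur (\sum_l prob a l *: ((XT l)^T *m XT l))
                   (\sum_l prob a l *: ((XT l)^T *m XF l))
                   (\sum_l prob a l *: ((XF l)^T *m XF l)).
Proof.
have ECijE (C : design p t n -> dropout p n -> 'M[R]_t) G :
    (forall l, C d l = G l) -> ECij C a d = \sum_l prob a l *: G l.
  by move=> CG; apply: eq_bigr => l _; rewrite CG.
rewrite /Cbar /schur (ECijE _ _ C11_gram) (ECijE _ _ C12_gram) (ECijE _ _ C22_gram).
congr (_ - _ *m _ *m _); rewrite linear_sum; apply: eq_bigr => l _.
by rewrite linearZ /= /C21 C12_gram.
Qed.

Lemma Cbar_ge_ECinfo : nnd (Cbar a d - \sum_l prob a l *: Cinfo R d l).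
Proof.
rewrite Cbar_wgram_schur (eq_bigr _ (fun l _ => congr1 _ (Cinfo_gram_schur l))).
exact: wgram_schur_ge prob_ge0.
Qed.

Lemma nnd_Cbar : nnd (Cbar a d).
Proof.
rewrite -(subrK (\sum_l prob a l *: Cinfo R d l) (Cbar a d)).
by apply: nnd_add Cbar_ge_ECinfo _; apply: nnd_sum prob_ge0 nnd_Cinfo.
Qed.

Lemma phi0_le_phi1 Phi : criterion Phi -> phi0 Phi a d <= phi1 Phi a d.
Proof.
move=> Phi_crit.
apply: le_trans (criterion_jensen Phi_crit prob_ge0 nnd_Cinfo sum_prob) _.
rewrite /phi1 -(subrK (\sum_l prob a l *: Cinfo R d l) (Cbar a d)) addrC.
by apply: criterion_mono Cbar_ge_ECinfo => //; apply: nnd_sum prob_ge0 nnd_Cinfo.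
Qed.

Lemma phi0_ge0 Phi : (forall C, nnd C -> 0 <= Phi C) -> 0 <= phi0 Phi a d.
Proof.
move=> Phi_ge0; apply: sumr_ge0 => l _.
exact: mulr_ge0 (prob_ge0 l) (Phi_ge0 _ (nnd_Cinfo l)).
Qed.

Lemma phi1_ge0 Phi : (forall C, nnd C -> 0 <= Phi C) -> 0 <= phi1 Phi a d.
Proof. by move=> Phi_ge0; apply/Phi_ge0/nnd_Cbar. Qed.

End Crossover.

Lemma ratio_le_ratio (R : realFieldType) (x m z : R) :
  0 <= x -> x <= m -> m <= z -> x / z <= x / m.
Proof.
move=> x_ge0 x_le_m m_le_z; have [m0|m_neq0] := eqVneq m 0.
  have -> : x = 0 by apply/eqP; rewrite eq_le x_ge0 -m0 x_le_m.
  by rewrite !mul0r.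
have m_gt0 : 0 < m by rewrite lt_def m_neq0 (le_trans x_ge0).
by rewrite ler_wpM2l // lef_pV2 ?posrE // (lt_le_trans m_gt0).
Qed.

Lemma efficiency_product_le (R : realFieldType) (f0 f1 m0 m1 : R) :
  0 <= f0 -> 0 <= f1 -> f0 <= m0 -> m0 <= m1 -> f1 <= m1 ->
  f1 / m1 * (f0 / f1) <= f0 / m0.
Proof.
move=> f0_ge0 f1_ge0 f0_le_m0 m0_le_m1 f1_le_m1.
have [->|f1_neq0] := eqVneq f1 0.
  by rewrite invr0 !mulr0 divr_ge0 // (le_trans f0_ge0).
have f1_gt0 : 0 < f1 by rewrite lt_def f1_neq0.
have -> : f1 / m1 * (f0 / f1) = f0 / m1.
  by field; rewrite !gt_eqF // (lt_le_trans f1_gt0).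
exact: ratio_le_ratio.
Qed.

Unset Implicit Arguments.

Theorem lemma2p2 (R : realFieldType) (p t n : nat) (a : 'I_p -> R)
    (Phi : 'M[R]_t -> R) (d0s d1s : design p t n) :
  dropout_dist a -> criterion Phi ->
  (forall d : design p t n, phi0 Phi a d <= phi0 Phi a d0s) ->
  (forall d : design p t n, phi1 Phi a d <= phi1 Phi a d1s) ->
  (forall d : design p t n, phi0 Phi a d <= phi1 Phi a d) /\
  ((forall C : 'M[R]_t, nnd C -> 0 <= Phi C) ->
   forall d : design p t n,
     let e0 := phi0 Phi a d / phi0 Phi a d0s in
     let e1 := phi1 Phi a d / phi1 Phi a d1s in
     let g := phi0 Phi a d / phi1 Phi a d in
     e1 * g <= e0 /\
     ((forall d' : design p t n, phi1 Phi a d' <= phi1 Phi a d) -> g <= e0)).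
Proof.
move=> a_dist Phi_crit d0s_opt d1s_opt.
have phi01 (d : design p t n) : phi0 Phi a d <= phi1 Phi a d by exact: phi0_le_phi1.
split=> // Phi_ge0 d e0 e1 g.
have m0_le_m1 : phi0 Phi a d0s <= phi1 Phi a d1s := le_trans (phi01 d0s) (d1s_opt d0s).
split=> [|d_opt]; rewrite /e0 /e1 /g.
  apply: efficiency_product_le (d0s_opt d) m0_le_m1 (d1s_opt d).
  - exact: phi0_ge0.
  - exact: phi1_ge0.
apply: ratio_le_ratio (le_trans m0_le_m1 (d_opt d1s)) => //.
exact: phi0_ge0.
Qed.
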